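(* Let $(f_n)_{n\ge0}$ be non-negative functions on $[0,T]$ with $M_0=\sup_{t\in[0,T]}f_0(t)<\infty$ and $M_1=\sup_{t\in[0,T]}f_1(t)<\infty$, and let $M=M_0+M_1$. Assume that for every $n\ge2$ and $t\in[0,T]$, $$f_n(t)\le\int_0^t\big(f_{n-1}(s)+f_{n-2}(s)\big)g(t-s)\,ds,$$ where $g:[0,T]\to\mathbb{R}_+$ is integrable. Then there exists a sequence $(a_n)$ of positive numbers with $\sum_{n\ge0}a_n^{1/p}<\infty$ for every $p>0$ and $\sup_{t\in[0,T]}f_n(t)\le Ma_n$ for all $n\ge0$. In particular $\sum_{n\ge0}\sup_{t\in[0,T]}f_n(t)^{1/p}<\infty$ for every $p>0$. *)

From HB Require Import structures.
From mathcomp Require Import all_boot all_order all_algebra.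
From mathcomp Require Import all_classical all_reals all_analysis.
Set Implicit Arguments. Unset Strict Implicit. Unset Printing Implicit Defensive.
Import Order.TTheory GRing.Theory Num.Theory.
Local Open Scope classical_set_scope.
Local Open Scope ring_scope.

Definition supT (R : realType) (T : R) (f : R -> R) : \bar R :=
  ereal_sup [set (f t)%:E | t in `[0, T]].

From HB Require Import structures.
From mathcomp Require Import all_boot all_order all_algebra.
From mathcomp Require Import all_classical all_reals all_analysis.
From mathcomp Require Import measurable_realfun ring lra.
Import Order.TTheory GRing.Theory Num.Theory.
Local Open Scope ring_scope.

(* Weight the recursion by exp(-lam t).  By dominated convergence the weighted
   mass int_0^T exp(-lam u) g(u) du tends to 0 as lam -> oo, so for lam large it
   is at most q^2/2; after the substitution u = t - s the recursion then
   propagates f_n(t) <= K q^n exp(lam t) from f_n, f_(n+1) to f_(n+2), because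
   (q^2/2) (q^(n+1) + q^n) <= q^(n+2) for q <= 1.  Starting from K = M/q, the
   suprema of the f_n decay faster than every geometric sequence, hence so do
   their p-th roots, which are therefore summable; a_n = sup f_n / M + exp(-n^2)
   is positive and inherits this decay. *)

Section faster_than_geometric.
Context {R : realType}.

Definition faster_than_geometric (x : nat -> R) : Prop :=
  forall q : R, 0 < q -> q <= 1 -> exists2 C : R, 0 <= C & forall n, x n <= C * q ^+ n.

Lemma faster_than_geometricZ (c : R) (x : nat -> R) : 0 <= c ->
  faster_than_geometric x -> faster_than_geometric (fun n => c * x n).
Proof.
move=> c0 hx q q0 q1; have [C C0 hC] := hx q q0 q1.
by exists (c * C) => [|n]; rewrite ?mulr_ge0// -mulrA ler_wpM2l.
Qed.

Lemma faster_than_geometricD (x y : nat -> R) :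
  faster_than_geometric x -> faster_than_geometric y ->
  faster_than_geometric (fun n => x n + y n).
Proof.
move=> hx hy q q0 q1; have [C C0 hC] := hx q q0 q1; have [D D0 hD] := hy q q0 q1.
by exists (C + D) => [|n]; rewrite ?addr_ge0// mulrDl lerD.
Qed.

Lemma faster_than_geometric_expR_sqr :
  faster_than_geometric (fun n => expR (- n%:R ^+ 2)).
Proof.
move=> q q0 _; exists (expR (ln q ^+ 2 / 4)) => [|n]; first exact: expR_ge0.
rewrite -{2}(lnK q0) -expRM_natl -expRD ler_expR.
(* completing the square: (n + ln q / 2)^2 >= 0 *)
have := sqr_ge0 (n%:R + ln q / 2); nra.
Qed.

Lemma faster_than_geometric_powR {x : nat -> R} {r : R} : 0 < r ->
  (forall n, 0 <= x n) -> faster_than_geometric x ->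
  faster_than_geometric (fun n => x n `^ r).
Proof.
move=> r0 x0 hx q q0 q1.
have q'0 : 0 < q `^ r^-1 by exact: powR_gt0.
have q'1 : q `^ r^-1 <= 1.
  by rewrite -[leRHS](powRr0 q); apply: ger_powR; rewrite ?q0 ?q1 ?invr_ge0 ?ltW.
have [C C0 hC] := hx _ q'0 q'1.
exists (C `^ r) => [|n]; first exact: powR_ge0.
have qn : ((q `^ r^-1) ^+ n) `^ r = q ^+ n.
  rewrite -powR_mulrn ?powR_ge0// -!powRrM mulrCA mulVf ?gt_eqF// mulr1.
  by rewrite powR_mulrn ?ltW.
rewrite -qn -powRM ?exprn_ge0 ?powR_ge0//.
apply: ge0_ler_powR.
- exact: ltW.
- by rewrite nnegrE.
- by rewrite nnegrE mulr_ge0// exprn_ge0// ltW.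
- exact: hC.
Qed.

Lemma nneseries_lty_faster_than_geometric {x : nat -> R} :
  (forall n, 0 <= x n) -> faster_than_geometric x ->
  (\sum_(0 <= n <oo) (x n)%:E < +oo)%E.
Proof.
move=> x0 hx.
have half0 : (0 : R) < 2^-1 by rewrite invr_gt0.
have half1 : (2 : R)^-1 <= 1 by rewrite invf_le1// ler1n.
have [C C0 hC] := hx _ half0 half1.
pose r := C * 2.
have sum_r : (\sum_(0 <= n <oo) (r / (2 ^ (n + 1))%:R)%:E = r%:E)%E.
  by have := @cvg_geometric_eseries_half R r 0; rewrite expr0 divr1 => /cvg_lim <-.
apply: (@le_lt_trans _ _ (\sum_(0 <= n <oo) (r / (2 ^ (n + 1))%:R)%:E)%E).
  apply: lee_nneseries => [n _ _|n _]; rewrite lee_fin ?x0//.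
  have -> : r / (2 ^ (n + 1))%:R = C * 2^-1 ^+ n.
    by rewrite /r natrX exprD expr1 exprVn; field; rewrite expf_neq0.
  exact: hC.
by rewrite sum_r ltry.
Qed.

End faster_than_geometric.

Section supT.
Context {R : realType}.

Lemma supT_ub {T t : R} (h : R -> R) : t \in `[0, T] -> ((h t)%:E <= supT T h)%E.
Proof. by move=> tI; apply: ereal_sup_ubound; exists t => //; rewrite inE. Qed.

Lemma supT_le (T : R) (h : R -> R) (b : \bar R) :
  (forall t, t \in `[0, T] -> ((h t)%:E <= b)%E) -> (supT T h <= b)%E.
Proof. by move=> hb; apply: ge_ereal_sup => _ [t tI <-]; apply: hb; rewrite inE. Qed.

Lemma supT_ge0 {T : R} {h : R -> R} : 0 <= T ->
  (forall t, t \in `[0, T] -> 0 <= h t) -> (0 <= supT T h)%E.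
Proof.
move=> T0 h0; have I0 : (0 : R) \in `[0, T] by rewrite in_itv /= lexx T0.
by apply: le_trans _ (supT_ub h I0); rewrite lee_fin h0.
Qed.

Lemma supT_fineK {T : R} {h : R -> R} : 0 <= T ->
  (forall t, t \in `[0, T] -> 0 <= h t) -> (supT T h < +oo)%E ->
  (fine (supT T h))%:E = supT T h.
Proof. by move=> T0 h0 hlt; rewrite fineK // ge0_fin_numE // supT_ge0. Qed.

Lemma supT_powR_le {T : R} {h : R -> R} (r : R) : 0 <= T -> 0 <= r ->
  (forall t, t \in `[0, T] -> 0 <= h t) -> (supT T h < +oo)%E ->
  (supT T (fun t => (h t `^ r)%R) <= ((fine (supT T h) `^ r)%R)%:E)%E.
Proof.
move=> T0 r0 h0 hlt; apply: supT_le => t tI; rewrite lee_fin.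
apply: ge0_ler_powR => //.
- by rewrite nnegrE h0.
- by rewrite nnegrE fine_ge0 // supT_ge0.
- by rewrite -lee_fin supT_fineK // supT_ub.
Qed.

End supT.

Lemma ge0_le_integral_nonmeasurable d (X : measurableType d) (R : realType)
    (mu : {measure set X -> \bar R}) (D : set X) (f1 f2 : X -> \bar R) :
  (forall x, D x -> (0 <= f1 x)%E) -> (forall x, D x -> (f1 x <= f2 x)%E) ->
  (\int[mu]_(x in D) f1 x <= \int[mu]_(x in D) f2 x)%E.
Proof.
move=> f10 f12.
have f20 x : D x -> (0 <= f2 x)%E by move=> Dx; exact: le_trans (f10 _ Dx) (f12 _ Dx).
rewrite (ge0_integralE mu f10) (ge0_integralE mu f20).
apply: ereal_sup_le => _ [h hle <-]; exists h => //= x.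
exact: le_trans (hle x) (lee_restrict f12 x).
Qed.

Section lebesgue_reflection.
Context {R : realType}.
Local Notation mu := (@lebesgue_measure R).

Lemma lebesgue_measure_reflect (c : R) (A : set R) : measurable A ->
  pushforward mu (fun x => c - x : measurableTypeR R) A = mu A.
Proof.
move=> mA; have mc : measurable_fun [set: R] (fun x => c - x).
  by apply: measurable_funB => //; exact: measurable_cst.
apply/esym/lebesgue_measure_unique => //= _ [[a b] _ <-]; rewrite /pushforward.
have -> : ((fun x => c - x) @^-1` `]a, b])%classic = `[c - b, c - a[%classic.
  by apply/seteqP; split => x /=; rewrite !in_itv/= => /andP[? ?]; apply/andP; split; lra.
rewrite !lebesgue_measure_itv /= !lte_fin ltrD2l ltrN2 opprB.
by case: ltP => // _; rewrite -!EFinD; congr EFin; ring.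
Qed.

Lemma ge0_integral_itv_reflect (a b : R) (h : R -> R) :
  measurable_fun `[a, b]%classic h -> (forall x, x \in `[a, b] -> 0 <= h x) ->
  (\int[mu]_(x in `[a, b]%classic) (h (a + b - x))%:E =
   \int[mu]_(x in `[a, b]%classic) (h x)%:E)%E.
Proof.
move=> mh h0; set c := a + b.
have mc : measurable_fun [set: R] (fun x => c - x).
  by apply: measurable_funB => //; exact: measurable_cst.
rewrite [RHS](eq_measure_integral (pushforward mu (fun x => c - x : measurableTypeR R))); last first.
  by move=> A mA _; exact/esym/lebesgue_measure_reflect.
rewrite ge0_integral_pushforward //; last 2 first.
- exact/measurable_EFinP.
- by move=> x; rewrite inE lee_fin => /h0.
congr (integral _ _ _); apply/seteqP; split => x /=; rewrite /c !in_itv/=.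
  by move=> /andP[? ?]; apply/andP; split; lra.
by move=> /andP[? ?]; apply/andP; split; lra.
Qed.

End lebesgue_reflection.

Section expR_weight.
Context {R : realType}.
Local Notation mu := (@lebesgue_measure R).

Lemma measurable_expR_weight (D : set R) (c : R) (g : R -> R) : measurable D ->
  measurable_fun D g -> measurable_fun D (fun u => expR (c * u) * g u).
Proof. by move=> mD mg; apply: measurable_funM => //; exact: measurableT_comp. Qed.

Context {T : R} {g : R -> R}.
Hypothesis g0 : forall t, t \in `[0, T] -> 0 <= g t.
Hypothesis ig : mu.-integrable `[0, T] (EFin \o g).

Let mg : measurable_fun `[0, T] g := (measurable_EFinP _ _).1 (measurable_int _ ig).

Let mg_oc : measurable_fun `]0, T]%classic g.
Proof. by apply: measurable_funS mg => //; apply: subset_itv; rewrite bnd_simp. Qed.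

(* On `]0, T] rather than `[0, T]: at u = 0 the weights do not tend to 0. *)
Lemma integral_expR_weight_cvg0 :
  ((\int[mu]_(u in `]0%R, T]) (expR (- k%:R * u) * g u)%:E)%E @[k --> \oo]
    --> 0%E)%classic.
Proof.
rewrite -(integral0 mu `]0%R, T]%classic).
apply: (@dominated_cvg _ _ _ mu `]0%R, T] (measurable_itv _) _ (cst 0%E) (EFin \o g)).
- by move=> k; apply/measurable_EFinP; exact: measurable_expR_weight.
- move=> u; rewrite /mkset /= in_itv /= => /andP[u0 _].
  apply/fine_cvgP; split; first exact: nearW.
  rewrite (_ : fine \o _ = fun k => expR (- u) ^+ k * g u); last first.
    by apply/funext => k; rewrite /= -expRM_natl mulrN mulNr.
  rewrite -(mul0r (g u)); apply: cvgMr_tmp; apply: cvg_expr.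
  by rewrite ger0_norm ?expR_ge0 // expR_lt1 oppr_lt0.
- by [].
- by apply: integrableS ig => //; apply: subset_itv; rewrite bnd_simp.
- move=> k u; rewrite /mkset /= in_itv /= => /andP[u0 uT].
  have gu : 0 <= g u by apply: g0; rewrite in_itv /= (ltW u0).
  rewrite ger0_norm ?mulr_ge0 ?expR_ge0 // lee_fin ler_piMl // expR_le1.
  by rewrite mulNr oppr_le0 mulr_ge0 // ltW.
Qed.

Lemma expR_weight_integral_small (eps : R) : 0 < eps ->
  exists2 lam : R, 0 <= lam &
    (\int[mu]_(u in `[0%R, T]%classic) (expR (- lam * u) * g u)%:E <= eps%:E)%E.
Proof.
move=> eps0; have eps0' : (0 < eps%:E)%E by rewrite lte_fin.
have [N _ hN] := integral_expR_weight_cvg0 _ (open_ereal_lt' eps0').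
exists N%:R => //; rewrite -integral_itv_obnd_cbnd.
  exact/ltW/(hN N (leqnn N)).
by apply/measurable_EFinP; exact: measurable_expR_weight.
Qed.

End expR_weight.

Section convolution_recursion.
Context {R : realType} {T : R} {f : nat -> R -> R} {g : R -> R}.
Local Notation mu := (@lebesgue_measure R).
Hypothesis T0 : 0 < T.
Hypothesis f0 : forall n t, t \in `[0, T] -> 0 <= f n t.
Hypothesis g0 : forall t, t \in `[0, T] -> 0 <= g t.
Hypothesis ig : mu.-integrable `[0, T] (EFin \o g).
Hypothesis f_rec : forall n t, t \in `[0, T] ->
  ((f n.+2 t)%:E <=
    \int[mu]_(s in `[0%R, t]%classic) ((f n.+1 s + f n s) * g (t - s))%:E)%E.

Let mg : measurable_fun `[0, T] g := (measurable_EFinP _ _).1 (measurable_int _ ig).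

Lemma f_rec_expR_bound {lam eps B : R} {n : nat} : 0 <= lam -> 0 <= B ->
  (\int[mu]_(u in `[0%R, T]%classic) (expR (- lam * u) * g u)%:E <= eps%:E)%E ->
  (forall s, s \in `[0, T] -> f n.+1 s + f n s <= B * expR (lam * s)) ->
  forall {t}, t \in `[0, T] -> f n.+2 t <= B * eps * expR (lam * t).
Proof.
move=> lam0 B0 heps hB t tI; move: (tI); rewrite in_itv/= => /andP[t0 tT].
have sub s : s \in `[0, t] -> s \in `[0, T] /\ t - s \in `[0, T].
  by rewrite !in_itv/= => /andP[? ?]; split; apply/andP; split; lra.
have mw : measurable_fun `[0%R, t]%classic (fun u => expR (- lam * u) * g u).
  apply: measurable_expR_weight => //.
  by apply: measurable_funS mg => //; apply: subset_itv; rewrite bnd_simp.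
pose h u := B * expR (lam * t) * (expR (- lam * u) * g u).
have h0 u : u \in `[0, t] -> 0 <= h u.
  by move=> /sub[uT _]; rewrite !mulr_ge0 ?expR_ge0 ?g0.
rewrite -lee_fin; apply: le_trans (f_rec n t tI) _.
apply: (@le_trans _ _ (\int[mu]_(s in `[0%R, t]%classic) (h (0 + t - s))%:E)%E).
  apply: ge0_le_integral_nonmeasurable => s /= /sub[sT tsT].
    by rewrite lee_fin mulr_ge0 ?addr_ge0 ?f0 ?g0.
  have -> : h (0 + t - s) = B * expR (lam * s) * g (t - s).
    by rewrite /h add0r mulrA -(mulrA B) -expRD; congr (B * expR _ * _); ring.
  by rewrite lee_fin ler_wpM2r ?g0 ?hB.
rewrite ge0_integral_itv_reflect //; last exact: measurable_funM.
under eq_integral do rewrite EFinM.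
have w0 u : `[0%R, t]%classic u -> (0 <= (expR (- lam * u) * g u)%:E)%E.
  by move=> /sub[uT _]; rewrite lee_fin mulr_ge0 ?expR_ge0 ?g0.
rewrite ge0_integralZl_EFin //; last 2 first.
- exact/measurable_EFinP.
- by rewrite mulr_ge0 ?expR_ge0.
rewrite (mulrAC B eps) [X in (_ <= X)%E]EFinM lee_wpmul2l ?lee_fin ?mulr_ge0 ?expR_ge0 //.
apply: le_trans heps; apply: ge0_subset_integral => //.
- by apply/measurable_EFinP; apply: measurable_expR_weight.
- by move=> u /= uI; rewrite lee_fin mulr_ge0 ?expR_ge0 ?g0.
- by apply: subset_itv; rewrite bnd_simp.
Qed.

Lemma f_le_geometric_expR {lam q K : R} : 0 <= lam -> 0 < q -> q <= 1 -> 0 <= K ->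
  (\int[mu]_(u in `[0%R, T]%classic) (expR (- lam * u) * g u)%:E <= (q ^+ 2 / 2)%:E)%E ->
  (forall t, t \in `[0, T] -> f 0 t <= K) ->
  (forall t, t \in `[0, T] -> f 1 t <= K * q) ->
  forall n t, t \in `[0, T] -> f n t <= K * q ^+ n * expR (lam * t).
Proof.
move=> lam0 q0 q1 K0 heps hf0 hf1.
have expR_ge1 t : t \in `[0, T] -> 1 <= expR (lam * t).
  by rewrite in_itv/= => /andP[t0 _]; rewrite -expR0 ler_expR mulr_ge0.
suff H n : (forall t, t \in `[0, T] -> f n t <= K * q ^+ n * expR (lam * t)) /\
           (forall t, t \in `[0, T] -> f n.+1 t <= K * q ^+ n.+1 * expR (lam * t)).
  by move=> n; have [] := H n.
elim: n => [|n [IH1 IH2]].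
  split=> t tI; rewrite ?expr0 ?expr1 ?mulr1.
    by apply: le_trans (hf0 t tI) _; rewrite ler_peMr ?expR_ge1.
  apply: le_trans (hf1 t tI) _; rewrite ler_peMr ?expR_ge1//.
  exact: mulr_ge0 K0 (ltW q0).
split=> // t tI; set P := K * q ^+ n.
have P0 : 0 <= P by rewrite mulr_ge0// exprn_ge0// ltW.
have hB s : s \in `[0, T] -> f n.+1 s + f n s <= P * (q + 1) * expR (lam * s).
  move=> sI; have := lerD (IH2 s sI) (IH1 s sI).
  by rewrite /P exprS mulrCA -mulrDl mulrDr mulr1 (mulrC q).
have B0 : 0 <= P * (q + 1) by rewrite mulr_ge0// addr_ge0// ltW.
apply: le_trans (f_rec_expR_bound lam0 B0 heps hB tI) _.
rewrite ler_wpM2r ?expR_ge0 //.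
have -> : K * q ^+ n.+2 = P * q ^+ 2 by rewrite /P -mulrA -exprD addn2.
(* (q + 1) / 2 <= 1 *)
have : 0 <= P * q ^+ 2 by rewrite mulr_ge0// exprn_ge0// ltW.
nra.
Qed.

Hypothesis hs0 : (supT T (f 0%N) < +oo)%E.
Hypothesis hs1 : (supT T (f 1%N) < +oo)%E.

Let M := fine (supT T (f 0%N)) + fine (supT T (f 1%N)).

Let f01_le_M : 0 <= M /\
  (forall t, t \in `[0, T] -> f 0 t <= M) /\ (forall t, t \in `[0, T] -> f 1 t <= M).
Proof.
have sup_ge0 n : (0 <= supT T (f n))%E by exact: supT_ge0 (ltW T0) (f0 n).
have fineK0 := supT_fineK (ltW T0) (f0 0) hs0.
have fineK1 := supT_fineK (ltW T0) (f0 1) hs1.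
have F00 : 0 <= fine (supT T (f 0%N)) by rewrite fine_ge0.
have F10 : 0 <= fine (supT T (f 1%N)) by rewrite fine_ge0.
split; first by rewrite addr_ge0.
split=> t tI; rewrite -lee_fin.
  by apply: le_trans (supT_ub _ tI) _; rewrite -fineK0 lee_fin lerDl.
by apply: le_trans (supT_ub _ tI) _; rewrite -fineK1 lee_fin lerDr.
Qed.

Lemma f_le_geometric (q : R) : 0 < q -> q <= 1 ->
  exists2 C : R, 0 <= C & forall n t, t \in `[0, T] -> f n t <= M * C * q ^+ n.
Proof.
move=> q0 q1; have [M0 [hfM0 hfM1]] := f01_le_M.
have eps0 : 0 < q ^+ 2 / 2 by rewrite divr_gt0// exprn_gt0.
have [lam lam0 hlam] := expR_weight_integral_small g0 ig _ eps0.
(* start the induction from K := M / q, so that f 1 <= M = K q *)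
have K0 : 0 <= M / q by rewrite divr_ge0// ltW.
have hf0 t : t \in `[0, T] -> f 0 t <= M / q.
  by move=> tI; apply: le_trans (hfM0 t tI) _; rewrite ler_pdivlMr // ler_piMr.
have hf1 t : t \in `[0, T] -> f 1 t <= M / q * q.
  by move=> tI; rewrite divfK ?gt_eqF ?hfM1.
have hb := f_le_geometric_expR lam0 q0 q1 K0 hlam hf0 hf1.
exists (expR (lam * T) / q) => [|n t tI]; first by rewrite divr_ge0// ?expR_ge0// ltW.
apply: le_trans (hb n t tI) _; move: tI; rewrite in_itv/= => /andP[t0 tT].
have -> : M * (expR (lam * T) / q) * q ^+ n = M / q * q ^+ n * expR (lam * T).
  by ring.
have Kq : 0 <= M / q * q ^+ n by rewrite mulr_ge0// exprn_ge0// ltW.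
by rewrite ler_wpM2l// ler_expR ler_wpM2l.
Qed.

Lemma supT_f_lty (n : nat) : (supT T (f n) < +oo)%E.
Proof.
have [C C0 hC] := f_le_geometric _ ltr01 (lexx 1).
apply: le_lt_trans (ltry (M * C * 1 ^+ n)).
by apply: supT_le => t tI; rewrite lee_fin hC.
Qed.

Lemma fine_supT_le_geometric (q : R) : 0 < q -> q <= 1 ->
  exists2 C : R, 0 <= C & forall n, fine (supT T (f n)) <= M * C * q ^+ n.
Proof.
move=> q0 q1; have [C C0 hC] := f_le_geometric _ q0 q1; exists C => // n.
rewrite -lee_fin supT_fineK ?supT_f_lty ?(ltW T0) //; last exact: f0.
by apply: supT_le => t tI; rewrite lee_fin hC.
Qed.

End convolution_recursion.

Theorem lemma3p9 (R : realType) (T : R) (f : nat -> R -> R) (g : R -> R) :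
  0 < T ->
  (forall n t, t \in `[0, T] -> 0 <= f n t) ->
  (supT T (f 0%N) < +oo)%E ->
  (supT T (f 1%N) < +oo)%E ->
  (forall t, t \in `[0, T] -> 0 <= g t) ->
  (@lebesgue_measure R).-integrable `[0, T] (EFin \o g) ->
  (forall n t, t \in `[0, T] ->
     ((f n.+2 t)%:E <=
       \int[@lebesgue_measure R]_(s in `[0%R, t]%classic) ((f n.+1 s + f n s) * g (t - s))%:E)%E) ->
  let M := fine (supT T (f 0%N)) + fine (supT T (f 1%N)) in
  exists a : nat -> R,
    (forall n, 0 < a n) /\
        (forall p : R, 0 < p -> (\sum_(0 <= n <oo) (((a n) `^ p^-1)%R)%:E < +oo)%E) /\
        (forall n, (supT T (f n) <= (M * a n)%:E)%E) /\
        (forall p : R, 0 < p ->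
           (\sum_(0 <= n <oo) (supT T (fun t : R => (f n t `^ p^-1)%R)) < +oo)%E).
Proof.
move=> T0 f0 hs0 hs1 g0 ig f_rec M.
have sup_lty := supT_f_lty T0 f0 g0 ig f_rec hs0 hs1.
have sup_geom := fine_supT_le_geometric T0 f0 g0 ig f_rec hs0 hs1.
pose S n := fine (supT T (f n)).
have S0 n : 0 <= S n by rewrite fine_ge0 // (supT_ge0 (ltW T0) (f0 n)).
have M0 : 0 <= M by exact: addr_ge0 (S0 0) (S0 1).
have S_fast : faster_than_geometric S.
  move=> q q0 q1; have [C C0 hC] := sup_geom q q0 q1.
  by exists (M * C) => //; rewrite mulr_ge0.
(* the summand exp(-n^2) keeps a positive when some f_n vanishes *)
pose a n := M^-1 * S n + expR (- n%:R ^+ 2).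
have a_gt0 n : 0 < a n by rewrite ltr_pwDr ?expR_gt0 // mulr_ge0 // invr_ge0.
have a_fast : faster_than_geometric a.
  apply: faster_than_geometricD; last exact: faster_than_geometric_expR_sqr.
  by apply: faster_than_geometricZ; rewrite ?invr_ge0.
exists a; split => //; split; [|split].
- move=> p p0; have p'0 : 0 < p^-1 by rewrite invr_gt0.
  apply: nneseries_lty_faster_than_geometric => [n|]; first exact: powR_ge0.
  exact: faster_than_geometric_powR p'0 (fun n => ltW (a_gt0 n)) a_fast.
- move=> n; rewrite -(supT_fineK (ltW T0) (f0 n) (sup_lty n)) lee_fin -/(S n).
  have [M_eq0|M_neq0] := eqVneq M 0.
    have [C _ hC] := sup_geom 1 ltr01 (lexx 1).
    by move: (hC n); rewrite -/M M_eq0 !mul0r.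
  by rewrite mulrDr mulVKf // lerDl mulr_ge0 // expR_ge0.
- move=> p p0; have p'0 : 0 < p^-1 by rewrite invr_gt0.
  apply: le_lt_trans (nneseries_lty_faster_than_geometric (fun n => powR_ge0 (S n) _)
    (faster_than_geometric_powR p'0 S0 S_fast)).
  apply: lee_nneseries => [n _ _|n _].
    by apply: supT_ge0 => [|t _]; [exact: ltW | exact: powR_ge0].
  exact: supT_powR_le (ltW T0) (ltW p'0) (f0 n) (sup_lty n).
Qed.
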